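(* For every $s>0$ there are constants $c,C>0$ such that for every locally constant function $f:\mathbb{Z}_2\to\mathbb{C}$, $$c\,N_s(f)\le \|f\|_{H^s(\mathbb{Z}_2)}\le C\,N_s(f),\qquad N_s(f)=\|f\|_{L^2(\mathbb{Z}_2)}+\left(\int_{\mathbb{Z}_2}\int_{\mathbb{Z}_2}\frac{|f(x)-f(y)|^2}{|x-y|_2^{1+2s}}\,d\mu(x)\,d\mu(y)\right)^{1/2}.$$
   Context: $\mathbb{Z}_2$ is the ring of 2-adic integers with 2-adic absolute value $|\cdot|_2$ and Haar probability measure $\mu$. $\Lambda=\mathbb{Q}_2/\mathbb{Z}_2$; $\mathcal F(f)(\lambda)=\int_{\mathbb{Z}_2}e^{-2i\pi\lambda x}f(x)\,d\mu(x)$; $\|f\|_{H^s(\mathbb{Z}_2)}=\big(\sum_{\lambda\in\Lambda}(1+|\lambda|_2)^{2s}|\mathcal F(f)(\lambda)|^2\big)^{1/2}$. *)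

From Stdlib Require Import Reals Lra.
From Coquelicot Require Import Coquelicot.
Open Scope R_scope.

(* 2-adic integers, as their sequence of binary digits: x = sum_i x_i 2^i. *)
Definition Z2 := nat -> bool.

Fixpoint trunc (x : Z2) (n : nat) : nat :=
  match n with
  | O => O
  | S m => (trunc x m + (if x m then Nat.pow 2 m else 0))%nat
  end.

Definition of_nat (a : nat) : Z2 := fun i => Nat.testbit a i.

Definition agree (x y : Z2) (n : nat) : Prop := forall i, (i < n)%nat -> x i = y i.

(* n is the 2-adic valuation of x - y: first index where the digits differ *)
Definition first_diff (x y : Z2) (n : nat) : bool :=
  Nat.eqb (trunc x n) (trunc y n) && negb (Bool.eqb (x n) (y n)).

(* |x - y|_2 = 2^(-v_2(x-y)), and 0 if x = y *)
Definition dist2 (x y : Z2) : R :=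
  Series (fun n => if first_diff x y n then (/ 2) ^ n else 0).

Definition locally_constant (f : Z2 -> C) : Prop :=
  forall x, exists n, forall y, agree x y n -> f y = f x.

(* Integral against the Haar probability measure mu of Z2, as the limit of
   the averages over the coset representatives 0, ..., 2^m - 1 of 2^m Z2
   (exact for locally constant / continuous integrands). *)
Definition haar_int (g : Z2 -> R) : R :=
  real (Lim_seq (fun m => (/ 2) ^ m *
        sum_n (fun a => g (of_nat a)) (Nat.pow 2 m - 1)%nat)).

Definition haar_intC (g : Z2 -> C) : C :=
  (haar_int (fun x => Re (g x)), haar_int (fun x => Im (g x))).

Definition L2norm (f : Z2 -> C) : R := sqrt (haar_int (fun x => Cmod (f x) ^ 2)).

(* Lambda = Q_2/Z_2 is enumerated bijectively by pairs (j, k) with k < 2^j and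
   (j = 0 or k odd): the pair stands for lambda = k / 2^j (reduced), so
   |lambda|_2 = 2^j for j >= 1 and |0|_2 = 0. *)
Definition lam_valid (j k : nat) : bool := Nat.eqb j 0 || Nat.odd k.
Definition lam_abs (j : nat) : R := if Nat.eqb j 0 then 0 else 2 ^ j.

(* e^{-2 i pi lambda x} with lambda = k/2^j: lambda x = k (x mod 2^j) / 2^j mod 1 *)
Definition chi (j k : nat) (x : Z2) : C :=
  let t := INR (k * trunc x j) / 2 ^ j in (cos (2 * PI * t), - sin (2 * PI * t)).

Definition fourier (f : Z2 -> C) (j k : nat) : C :=
  haar_intC (fun x => Cmult (chi j k x) (f x)).

(* H^s norm: sum over Lambda, grouped by the exponent j *)
Definition Hs_norm (s : R) (f : Z2 -> C) : R :=
  sqrt (Series (fun j =>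
    sum_n (fun k => if lam_valid j k
                    then Rpower (1 + lam_abs j) (2 * s) * Cmod (fourier f j k) ^ 2
                    else 0) (Nat.pow 2 j - 1)%nat)).

Definition Ns (s : R) (f : Z2 -> C) : R :=
  L2norm f +
  sqrt (haar_int (fun x => haar_int (fun y =>
          Cmod (Cminus (f x) (f y)) ^ 2 / Rpower (dist2 x y) (1 + 2 * s)))).

From Stdlib Require Import Reals Lra Lia Classical ClassicalEpsilon FunctionalExtensionality.
From Coquelicot Require Import Coquelicot.
Open Scope R_scope.

(* Since [Z2] is compact, a locally constant [f] is constant on the cosets of [2^n Z2] for
   some [n], and every quantity below is a finite sum at level [n].  Let [E_k] be the squared
   L^2 norm of the conditional expectation of [f] on the cosets of [2^k Z2]; by Parseval on
   [Z/2^k], [E_k] is the Fourier mass of the [lambda] with [|lambda|_2 <= 2^k], so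
   [||f||_{H^s}^2 = E_0 + sum_j (1 + 2^(j+1))^(2s) (E_(j+1) - E_j)].  Splitting the kernel
   [|x - y|_2^(-1-2s)] over the levels at which [x] and [y] agree turns the Gagliardo double
   integral into [sum_k d_k (||f||^2 - E_k)], where [||f||^2 - E_k] is the conditional variance
   and [d_k] is of order [2^(2sk)].  Both sides are therefore comparable with
   [sum_k 2^(2sk) (||f||^2 - E_k)]: one way because [E_(j+1) - E_j <= ||f||^2 - E_j], the other
   by summation by parts. *)

(* [sum_lt N g] is [g 0 + ... + g (N - 1)]; unlike [sum_n] it has an empty case. *)
Fixpoint sum_lt (N : nat) (g : nat -> R) : R :=
  match N with O => 0 | S N' => sum_lt N' g + g N' end.

Lemma sum_lt_S N g : sum_lt (S N) g = sum_lt N g + g N.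
Proof. reflexivity. Qed.

Lemma sum_lt_ext N g h : (forall i, (i < N)%nat -> g i = h i) -> sum_lt N g = sum_lt N h.
Proof.
  induction N as [|N IH]; intros H; simpl; [reflexivity|].
  rewrite IH by (intros; apply H; lia). rewrite H by lia. reflexivity.
Qed.

Lemma sum_lt_plus N g h : sum_lt N (fun i => g i + h i) = sum_lt N g + sum_lt N h.
Proof. induction N; simpl; [|rewrite IHN]; lra. Qed.

Lemma sum_lt_minus N g h : sum_lt N (fun i => g i - h i) = sum_lt N g - sum_lt N h.
Proof. induction N; simpl; [|rewrite IHN]; lra. Qed.

Lemma sum_lt_scal_l N c g : sum_lt N (fun i => c * g i) = c * sum_lt N g.
Proof. induction N; simpl; [|rewrite IHN]; lra. Qed.

Lemma sum_lt_scal_r N c g : sum_lt N (fun i => g i * c) = sum_lt N g * c.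
Proof. induction N; simpl; [|rewrite IHN]; lra. Qed.

Lemma sum_lt_zero N : sum_lt N (fun _ => 0) = 0.
Proof. induction N; simpl; [|rewrite IHN]; lra. Qed.

Lemma sum_lt_const N c : sum_lt N (fun _ => c) = INR N * c.
Proof. induction N; simpl sum_lt; [simpl; lra|]. rewrite IHN, S_INR; lra. Qed.

Lemma sum_lt_le N g h : (forall i, (i < N)%nat -> g i <= h i) -> sum_lt N g <= sum_lt N h.
Proof.
  induction N as [|N IH]; intros H; simpl; [lra|].
  assert (g N <= h N) by (apply H; lia).
  assert (sum_lt N g <= sum_lt N h) by (apply IH; intros; apply H; lia).
  lra.
Qed.

Lemma sum_lt_nonneg N g : (forall i, (i < N)%nat -> 0 <= g i) -> 0 <= sum_lt N g.
Proof. intros H. rewrite <- (sum_lt_zero N). apply sum_lt_le. auto. Qed.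

Lemma sum_lt_swap N M (g : nat -> nat -> R) :
  sum_lt N (fun i => sum_lt M (g i)) = sum_lt M (fun j => sum_lt N (fun i => g i j)).
Proof.
  induction N; simpl.
  - rewrite sum_lt_zero. reflexivity.
  - rewrite IHN, <- sum_lt_plus. reflexivity.
Qed.

Lemma sum_lt_add N M g : sum_lt (N + M) g = sum_lt N g + sum_lt M (fun i => g (N + i)%nat).
Proof.
  induction M; simpl.
  - rewrite Nat.add_0_r. lra.
  - rewrite Nat.add_succ_r. simpl. rewrite IHM. lra.
Qed.

Lemma sum_lt_mul N M g :
  sum_lt (N * M) g = sum_lt N (fun r => sum_lt M (fun q => g (r + N * q)%nat)).
Proof.
  induction M.
  - rewrite Nat.mul_0_r. simpl. rewrite sum_lt_zero. reflexivity.
  - rewrite Nat.mul_succ_r, sum_lt_add, IHM. simpl sum_lt. rewrite sum_lt_plus.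
    f_equal. apply sum_lt_ext; intros. f_equal. lia.
Qed.

Lemma sum_lt_even_odd N g :
  sum_lt (2 * N) g = sum_lt N (fun i => g (2 * i)%nat + g (2 * i + 1)%nat).
Proof.
  induction N; [reflexivity|].
  replace (2 * S N)%nat with (S (S (2 * N))) by lia.
  rewrite !sum_lt_S, IHN. replace (S (2 * N)) with (2 * N + 1)%nat by lia. lra.
Qed.

Lemma sum_lt_delta N r X : (r < N)%nat ->
  sum_lt N (fun r' => if Nat.eqb r r' then X r' else 0) = X r.
Proof.
  induction N; intros H; [lia|]. simpl.
  destruct (Nat.eqb_spec r N).
  - subst. rewrite (sum_lt_ext _ _ (fun _ => 0)), sum_lt_zero; [lra|].
    intros i Hi. destruct (Nat.eqb_spec N i); [lia|reflexivity].
  - rewrite IHN by lia. lra.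
Qed.

Lemma sum_lt_vanishing_tail N M h :
  (forall i, (N <= i)%nat -> h i = 0) -> (N <= M)%nat -> sum_lt M h = sum_lt N h.
Proof. intros H HM. induction HM; [reflexivity|]. rewrite sum_lt_S, IHHM, H by lia. lra. Qed.

Lemma sum_lt_telescope N (G : nat -> R) : sum_lt N (fun k => G (S k) - G k) = G N - G O.
Proof. induction N; simpl; [|rewrite IHN]; lra. Qed.

Lemma sum_lt_sqr N a : sum_lt N a ^ 2 = sum_lt N (fun r => sum_lt N (fun r' => a r * a r')).
Proof.
  replace (sum_lt N a ^ 2) with (sum_lt N a * sum_lt N a) by ring.
  rewrite <- sum_lt_scal_r. apply sum_lt_ext; intros. rewrite <- sum_lt_scal_l. reflexivity.
Qed.

Lemma sum_n_sum_lt g N : sum_n g N = sum_lt (S N) g.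
Proof. induction N; [rewrite sum_O; simpl; lra|]. rewrite sum_Sn, IHN. reflexivity. Qed.

Lemma pow2_gt0 n : (0 < 2 ^ n)%nat.
Proof. induction n; simpl; lia. Qed.

Lemma sum_n_pow2 g n : sum_n g (2 ^ n - 1)%nat = sum_lt (2 ^ n) g.
Proof. rewrite sum_n_sum_lt. f_equal. pose proof (pow2_gt0 n). lia. Qed.

Lemma Series_eventually_zero h n :
  (forall i, (n < i)%nat -> h i = 0) -> Series h = sum_lt (S n) h.
Proof.
  intros H. unfold Series.
  rewrite (Lim_seq_ext_loc _ (fun _ => sum_lt (S n) h)), Lim_seq_const; [reflexivity|].
  exists n. intros m Hm. rewrite sum_n_sum_lt.
  apply sum_lt_vanishing_tail; [intros; apply H|]; lia.
Qed.

Lemma sum_pairs_sqr_diff M (u : nat -> R) :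
  sum_lt M (fun q => sum_lt M (fun q' => (u q - u q') ^ 2))
  = 2 * INR M * sum_lt M (fun q => u q ^ 2) - 2 * sum_lt M u ^ 2.
Proof.
  rewrite sum_lt_sqr.
  rewrite (sum_lt_ext _ _ (fun q => INR M * u q ^ 2 + sum_lt M (fun q' => u q' ^ 2)
                                     - 2 * sum_lt M (fun q' => u q * u q'))).
  - rewrite sum_lt_minus, sum_lt_plus, sum_lt_scal_l, sum_lt_const, sum_lt_scal_l. ring.
  - intros q _.
    rewrite <- sum_lt_scal_l, <- (sum_lt_const M (u q ^ 2)), <- sum_lt_plus, <- sum_lt_minus.
    apply sum_lt_ext; intros. ring.
Qed.

Lemma trunc_lt x n : (trunc x n < 2 ^ n)%nat.
Proof. induction n; simpl; [lia|]. destruct (x n); lia. Qed.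

Lemma trunc_eq_agree x y n : trunc x n = trunc y n <-> agree x y n.
Proof.
  unfold agree. induction n as [|n IH]; simpl.
  - split; intros; [lia|reflexivity].
  - pose proof (trunc_lt x n). pose proof (trunc_lt y n). split.
    + intros E i Hi.
      assert (trunc x n = trunc y n /\ x n = y n) as [E1 E2]
        by (destruct (x n), (y n); split; auto; lia).
      destruct (Nat.eq_dec i n); [subst; auto|]. apply IH; [auto|lia].
    + intros Hxy. rewrite (proj2 IH) by (intros; apply Hxy; lia). rewrite (Hxy n) by lia.
      reflexivity.
Qed.

Lemma trunc_of_nat a n : trunc (of_nat a) n = (a mod 2 ^ n)%nat.
Proof.
  induction n; simpl; [reflexivity|].
  rewrite IHn. replace (2 ^ n + (2 ^ n + 0))%nat with (2 ^ n * 2)%nat by lia.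
  rewrite (Nat.Div0.mod_mul_r a (2 ^ n) 2).
  pose proof (Nat.testbit_spec' a n) as Hbit. unfold of_nat.
  destruct (Nat.testbit a n); cbn [Nat.b2n] in Hbit; rewrite <- Hbit; lia.
Qed.

Lemma agree_weaken x y n m : (m <= n)%nat -> agree x y n -> agree x y m.
Proof. unfold agree; intros Hm H i Hi. apply H; lia. Qed.

Lemma agree_trans x y z n : agree x y n -> agree y z n -> agree x z n.
Proof. unfold agree; intros H1 H2 i Hi; rewrite H1; auto. Qed.

Lemma agree_of_nat a b n :
  agree (of_nat a) (of_nat b) n <-> (a mod 2 ^ n = b mod 2 ^ n)%nat.
Proof. rewrite <- trunc_eq_agree, !trunc_of_nat. tauto. Qed.

Lemma mod_pow2_block r q k : (r < 2 ^ k)%nat -> ((r + 2 ^ k * q) mod 2 ^ k = r)%nat.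
Proof.
  intros Hr. replace (r + 2 ^ k * q)%nat with (r + q * 2 ^ k)%nat by lia.
  rewrite Nat.Div0.mod_add. apply Nat.mod_small, Hr.
Qed.

Definition coset_constant {T : Type} (n : nat) (g : Z2 -> T) : Prop :=
  forall x y, agree x y n -> g x = g y.

Definition avg (m : nat) (g : Z2 -> R) : R :=
  (/ 2) ^ m * sum_lt (2 ^ m) (fun a => g (of_nat a)).

Lemma avg_succ g n m : coset_constant n g -> (n <= m)%nat -> avg (S m) g = avg m g.
Proof.
  intros Hg Hm. unfold avg.
  replace (2 ^ S m)%nat with (2 ^ m + 2 ^ m)%nat by (simpl; lia).
  rewrite sum_lt_add.
  rewrite (sum_lt_ext (2 ^ m) (fun i => g (of_nat (2 ^ m + i)%nat)) (fun a => g (of_nat a))).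
  - simpl pow. field.
  - intros i _. apply Hg, (agree_weaken _ _ m); auto. apply agree_of_nat.
    replace (2 ^ m + i)%nat with (i + 1 * 2 ^ m)%nat by lia. apply Nat.Div0.mod_add.
Qed.

Lemma avg_stable g n m : coset_constant n g -> (n <= m)%nat -> avg m g = avg n g.
Proof. intros Hg Hm. induction Hm; [reflexivity|]. rewrite (avg_succ g n m); auto. Qed.

Lemma haar_int_avg g n : coset_constant n g -> haar_int g = avg n g.
Proof.
  intros Hg. unfold haar_int.
  rewrite (Lim_seq_ext_loc _ (fun _ => avg n g)), Lim_seq_const; [reflexivity|].
  exists n. intros m Hm. rewrite sum_n_pow2. apply (avg_stable g n m); auto.
Qed.

Lemma avg_blocks m j (g : Z2 -> R) : (j <= m)%nat ->
  avg m g = (/ 2) ^ m * sum_lt (2 ^ j) (fun r =>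
              sum_lt (2 ^ (m - j)) (fun q => g (of_nat (r + 2 ^ j * q)))).
Proof.
  intros H. unfold avg. f_equal.
  replace (2 ^ m)%nat with (2 ^ j * 2 ^ (m - j))%nat
    by (rewrite <- Nat.pow_add_r; f_equal; lia).
  apply sum_lt_mul.
Qed.

(* Telescoping: [2 sin (x/2) cos (k x) = sin ((k+1) x - x/2) - sin (k x - x/2)],
   and similarly for [sin]. *)
Lemma sum_cos_sin_full_period N x m :
  sin (x / 2) <> 0 -> INR N * x = 2 * INR m * PI ->
  sum_lt N (fun k => cos (INR k * x)) = 0 /\ sum_lt N (fun k => sin (INR k * x)) = 0.
Proof.
  intros Hh HNx. set (h := x / 2).
  assert (Hend : forall F, F (- h + 2 * INR m * PI) = F (- h) ->
            sum_lt N (fun k => F (INR (S k) * x - h) - F (INR k * x - h)) = 0).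
  { intros F HF. rewrite (sum_lt_telescope N (fun k => F (INR k * x - h))). simpl INR.
    replace (INR N * x - h) with (- h + 2 * INR m * PI) by lra.
    replace (0 * x - h) with (- h) by lra. rewrite HF. ring. }
  assert (Hshift : forall k, INR (S k) * x - h = INR k * x + h)
    by (intros; rewrite S_INR; unfold h; lra).
  split.
  - assert (E : sum_lt N (fun k => sin (INR (S k) * x - h) - sin (INR k * x - h))
                = 2 * sin h * sum_lt N (fun k => cos (INR k * x))).
    { rewrite <- sum_lt_scal_l. apply sum_lt_ext; intros k _.
      rewrite Hshift, sin_plus, sin_minus. ring. }
    rewrite Hend in E by apply sin_period.
    symmetry in E. apply Rmult_integral in E as [E|E]; [|auto]. unfold h in E. lra.
  - assert (E : sum_lt N (fun k => cos (INR (S k) * x - h) - cos (INR k * x - h))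
                = -2 * sin h * sum_lt N (fun k => sin (INR k * x))).
    { rewrite <- sum_lt_scal_l. apply sum_lt_ext; intros k _.
      rewrite Hshift, cos_plus, cos_minus. ring. }
    rewrite Hend in E by apply cos_period.
    symmetry in E. apply Rmult_integral in E as [E|E]; [|auto]. unfold h in E. lra.
Qed.

Lemma sum_cos_sin_root_of_unity N m : (0 < m < N)%nat ->
  let x := 2 * PI * INR m / INR N in
  sum_lt N (fun k => cos (INR k * x)) = 0 /\ sum_lt N (fun k => sin (INR k * x)) = 0.
Proof.
  intros Hm x. pose proof PI_RGT_0.
  assert (0 < INR N) by (apply lt_0_INR; lia).
  assert (0 < INR m) by (apply lt_0_INR; lia).
  assert (INR m < INR N) by (apply lt_INR; lia).
  apply (sum_cos_sin_full_period N x m); [|unfold x; field; lra].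
  apply Rgt_not_eq, sin_gt_0; unfold x.
  - apply Rdiv_lt_0_compat; [apply Rdiv_lt_0_compat|]; nra.
  - apply (Rmult_lt_reg_r (2 * INR N)); [lra|]. field_simplify; nra.
Qed.

Lemma dft_orthogonality N r r' : (r < N)%nat -> (r' < N)%nat ->
  let x := 2 * PI * (INR r' - INR r) / INR N in
  sum_lt N (fun k => cos (INR k * x)) = (if Nat.eqb r r' then INR N else 0) /\
  sum_lt N (fun k => sin (INR k * x)) = 0.
Proof.
  intros Hr Hr' x. assert (0 < INR N) by (apply lt_0_INR; lia).
  destruct (Nat.eqb_spec r r') as [<-|Hne].
  - assert (Hx : forall i, INR i * x = 0) by (intros; unfold x; field; lra).
    split.
    + rewrite (sum_lt_ext _ _ (fun _ => 1)), sum_lt_const; [ring|].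
      intros. rewrite Hx. apply cos_0.
    + rewrite (sum_lt_ext _ _ (fun _ => 0)); [apply sum_lt_zero|].
      intros. rewrite Hx. apply sin_0.
  - destruct (Nat.ltb_spec r r').
    + pose proof (sum_cos_sin_root_of_unity N (r' - r) ltac:(lia)) as [A B].
      rewrite minus_INR in A, B by lia. auto.
    + pose proof (sum_cos_sin_root_of_unity N (r - r') ltac:(lia)) as [A B].
      rewrite minus_INR in A, B by lia.
      assert (Hx : forall i, INR i * x = - (INR i * (2 * PI * (INR r - INR r') / INR N)))
        by (intros; unfold x; field; lra).
      split.
      * rewrite <- A. apply sum_lt_ext; intros. rewrite Hx. apply cos_neg.
      * rewrite (sum_lt_ext _ _ (fun k => -1 * sin (INR k * (2 * PI * (INR r - INR r') / INR N)))).
        -- rewrite sum_lt_scal_l, B. ring.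
        -- intros. rewrite Hx, sin_neg. ring.
Qed.

(* Parseval for the discrete Fourier transform of [U + i V] on [Z/NZ]. *)
Lemma dft_parseval N (U V : nat -> R) : (0 < N)%nat ->
  sum_lt N (fun k =>
      sum_lt N (fun r => cos (2 * PI * (INR (k * r) / INR N)) * U r
                         + sin (2 * PI * (INR (k * r) / INR N)) * V r) ^ 2
    + sum_lt N (fun r => cos (2 * PI * (INR (k * r) / INR N)) * V r
                         - sin (2 * PI * (INR (k * r) / INR N)) * U r) ^ 2)
  = INR N * sum_lt N (fun r => U r ^ 2 + V r ^ 2).
Proof.
  intros HN. assert (0 < INR N) by (apply lt_0_INR; lia).
  set (x := fun r r' : nat => 2 * PI * (INR r' - INR r) / INR N).
  transitivity (sum_lt N (fun k => sum_lt N (fun r => sum_lt N (fun r' =>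
      (U r * U r' + V r * V r') * cos (INR k * x r r')
    + (U r * V r' - V r * U r') * sin (INR k * x r r'))))).
  { apply sum_lt_ext; intros k _. rewrite !sum_lt_sqr, <- sum_lt_plus.
    apply sum_lt_ext; intros r _. rewrite <- sum_lt_plus. apply sum_lt_ext; intros r' _.
    set (a := 2 * PI * (INR (k * r) / INR N)). set (b := 2 * PI * (INR (k * r') / INR N)).
    replace (INR k * x r r') with (b - a) by (unfold x, a, b; rewrite !mult_INR; field; lra).
    rewrite cos_minus, sin_minus. ring. }
  rewrite sum_lt_swap, <- sum_lt_scal_l. apply sum_lt_ext; intros r Hr.
  rewrite sum_lt_swap.
  transitivity (sum_lt N (fun r' => if Nat.eqb r r' then (U r * U r' + V r * V r') * INR N else 0)).
  { apply sum_lt_ext; intros r' Hr'.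
    destruct (dft_orthogonality N r r' Hr Hr') as [A B].
    rewrite sum_lt_plus, !sum_lt_scal_l. fold (x r r') in A, B. rewrite A, B.
    destruct (Nat.eqb r r'); ring. }
  rewrite sum_lt_delta by auto. ring.
Qed.

Lemma Cmod_sqr z : Cmod z ^ 2 = fst z ^ 2 + snd z ^ 2.
Proof. unfold Cmod. apply pow2_sqrt. nra. Qed.

Lemma Cmod_minus_sqr z w : Cmod (Cminus z w) ^ 2 = (fst z - fst w) ^ 2 + (snd z - snd w) ^ 2.
Proof. rewrite Cmod_sqr. unfold Cminus, Cplus, Copp. cbn [fst snd]. ring. Qed.

Lemma Cmod_minus_diag z : Cmod (Cminus z z) = 0.
Proof.
  unfold Cmod, Cminus, Cplus, Copp. cbn [fst snd].
  replace (fst z + - fst z) with 0 by ring. replace (snd z + - snd z) with 0 by ring.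
  replace (0 ^ 2 + 0 ^ 2) with 0 by ring. apply sqrt_0.
Qed.

Lemma INR_pow2 j : INR (2 ^ j) = 2 ^ j.
Proof. rewrite pow_INR. reflexivity. Qed.

Definition dft_angle (j k r : nat) : R := 2 * PI * (INR (k * r) / 2 ^ j).

Lemma chi_coset_constant j k m : (j <= m)%nat -> coset_constant m (chi j k).
Proof.
  intros Hj x y H. unfold chi. rewrite (proj2 (trunc_eq_agree x y j)); [reflexivity|].
  eapply agree_weaken; eauto.
Qed.

Lemma chi_of_nat_block j k r q : (r < 2 ^ j)%nat ->
  chi j k (of_nat (r + 2 ^ j * q)) = (cos (dft_angle j k r), - sin (dft_angle j k r)).
Proof.
  intros Hr. unfold chi, dft_angle. rewrite trunc_of_nat, mod_pow2_block by auto. reflexivity.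
Qed.

Definition block_re (f : Z2 -> C) j m r :=
  sum_lt (2 ^ (m - j)) (fun q => fst (f (of_nat (r + 2 ^ j * q)))).
Definition block_im (f : Z2 -> C) j m r :=
  sum_lt (2 ^ (m - j)) (fun q => snd (f (of_nat (r + 2 ^ j * q)))).

(* The Fourier coefficients at level [j] are the DFT on [Z/2^j] of the block sums. *)
Lemma fourier_blocks f n j k m : coset_constant n f -> (j <= m)%nat -> (n <= m)%nat ->
  fourier f j k =
  ((/ 2) ^ m * sum_lt (2 ^ j) (fun r => cos (dft_angle j k r) * block_re f j m r
                                       + sin (dft_angle j k r) * block_im f j m r),
   (/ 2) ^ m * sum_lt (2 ^ j) (fun r => cos (dft_angle j k r) * block_im f j m r
                                       - sin (dft_angle j k r) * block_re f j m r)).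
Proof.
  intros Hf Hj Hn. unfold fourier, haar_intC.
  assert (Hprod : coset_constant m (fun x => Cmult (chi j k x) (f x))).
  { intros x y H. rewrite (chi_coset_constant j k m Hj x y H), (Hf x y); [reflexivity|].
    eapply agree_weaken; eauto. }
  rewrite !(haar_int_avg _ m), !(avg_blocks m j)
    by (auto; intros x y H; rewrite (Hprod x y H); reflexivity).
  f_equal; f_equal; apply sum_lt_ext; intros r Hr; unfold block_re, block_im;
    [rewrite <- !sum_lt_scal_l, <- sum_lt_plus | rewrite <- !sum_lt_scal_l, <- sum_lt_minus];
    apply sum_lt_ext; intros q _; rewrite chi_of_nat_block by auto;
    unfold Re, Im, Cmult; simpl; ring.
Qed.

(* [level_energy f j] is the squared L^2 norm of the conditional expectation of [f] on the
   cosets of [2^j Z2]: the Fourier mass of all [lambda] with [|lambda|_2 <= 2^j]. *)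
Definition level_energy (f : Z2 -> C) (j : nat) : R :=
  sum_lt (2 ^ j) (fun k => Cmod (fourier f j k) ^ 2).

Definition L2sq (f : Z2 -> C) : R := haar_int (fun x => Cmod (f x) ^ 2).

Lemma level_energy_blocks f n j m : coset_constant n f -> (j <= m)%nat -> (n <= m)%nat ->
  level_energy f j = (/ 2) ^ m * (/ 2) ^ m * 2 ^ j *
                     sum_lt (2 ^ j) (fun r => block_re f j m r ^ 2 + block_im f j m r ^ 2).
Proof.
  intros Hf Hj Hn. unfold level_energy.
  rewrite (sum_lt_ext _ _ (fun k => ((/ 2) ^ m * (/ 2) ^ m) *
     (sum_lt (2 ^ j) (fun r => cos (2 * PI * (INR (k * r) / INR (2 ^ j))) * block_re f j m r
                               + sin (2 * PI * (INR (k * r) / INR (2 ^ j))) * block_im f j m r) ^ 2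
    + sum_lt (2 ^ j) (fun r => cos (2 * PI * (INR (k * r) / INR (2 ^ j))) * block_im f j m r
                               - sin (2 * PI * (INR (k * r) / INR (2 ^ j))) * block_re f j m r) ^ 2))).
  - rewrite sum_lt_scal_l, dft_parseval by apply pow2_gt0. rewrite INR_pow2. ring.
  - intros k _. rewrite Cmod_sqr, (fourier_blocks f n j k m) by auto. simpl fst; simpl snd.
    unfold dft_angle. rewrite INR_pow2. ring.
Qed.

Lemma L2sq_avg f n : coset_constant n f -> L2sq f = avg n (fun x => Cmod (f x) ^ 2).
Proof. intros Hf. apply haar_int_avg. intros x y H. rewrite (Hf x y H). reflexivity. Qed.

Lemma level_energy_top f n j : coset_constant n f -> (n <= j)%nat -> level_energy f j = L2sq f.
Proof.
  intros Hf Hj. rewrite (level_energy_blocks f n j j), (L2sq_avg f n) by auto.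
  rewrite <- (avg_stable _ n j) by (auto; intros x y H; rewrite (Hf x y H); reflexivity).
  unfold avg. replace ((/ 2) ^ j * (/ 2) ^ j * 2 ^ j) with ((/ 2) ^ j).
  2:{ rewrite pow_inv. field. apply pow_nonzero; lra. }
  f_equal. apply sum_lt_ext; intros r _. rewrite Cmod_sqr. unfold block_re, block_im.
  rewrite Nat.sub_diag. simpl. rewrite Nat.mul_0_r, Nat.add_0_r. ring.
Qed.

Lemma chi_double j i x : chi (S j) (2 * i) x = chi j i x.
Proof.
  unfold chi. simpl trunc. set (T := trunc x j).
  assert (E : 2 * PI * (INR (2 * i * (T + (if x j then 2 ^ j else 0))) / 2 ^ S j)
              = 2 * PI * (INR (i * T) / 2 ^ j) + 2 * INR (if x j then i else 0) * PI).
  { assert (0 < 2 ^ j) by (apply pow_lt; lra).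
    destruct (x j); rewrite !mult_INR, ?plus_INR, ?pow_INR; change (INR 2) with 2;
      try change (INR 0) with 0; simpl pow; field; lra. }
  rewrite E, cos_period, sin_period. reflexivity.
Qed.

Lemma fourier_double f j i : fourier f (S j) (2 * i) = fourier f j i.
Proof.
  unfold fourier. f_equal. apply functional_extensionality; intros x.
  rewrite chi_double. reflexivity.
Qed.

Lemma level_energy_succ f j :
  level_energy f (S j) =
  level_energy f j + sum_lt (2 ^ j) (fun i => Cmod (fourier f (S j) (2 * i + 1)) ^ 2).
Proof.
  unfold level_energy. replace (2 ^ S j)%nat with (2 * 2 ^ j)%nat by (simpl; lia).
  rewrite sum_lt_even_odd, sum_lt_plus. f_equal.
  apply sum_lt_ext; intros. rewrite fourier_double. reflexivity.
Qed.

Lemma level_energy_le_succ f j : level_energy f j <= level_energy f (S j).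
Proof.
  rewrite level_energy_succ.
  assert (0 <= sum_lt (2 ^ j) (fun i => Cmod (fourier f (S j) (2 * i + 1)) ^ 2))
    by (apply sum_lt_nonneg; intros; apply pow2_ge_0).
  lra.
Qed.

Lemma level_energy_monotone f j k : (j <= k)%nat -> level_energy f j <= level_energy f k.
Proof. intros H; induction H; [lra|]. pose proof (level_energy_le_succ f m). lra. Qed.

Lemma level_energy_nonneg f j : 0 <= level_energy f j.
Proof. apply sum_lt_nonneg; intros; apply pow2_ge_0. Qed.

Definition Hs_weight (s : R) (j : nat) : R := Rpower (1 + lam_abs j) (2 * s).

Definition Hs_shell (s : R) (f : Z2 -> C) (j : nat) : R :=
  sum_n (fun k => if lam_valid j k
                  then Rpower (1 + lam_abs j) (2 * s) * Cmod (fourier f j k) ^ 2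
                  else 0) (Nat.pow 2 j - 1)%nat.

Lemma Hs_shell_0 s f : Hs_shell s f 0 = level_energy f 0.
Proof.
  unfold Hs_shell. rewrite sum_n_pow2. unfold level_energy, lam_valid, lam_abs. simpl.
  rewrite Rplus_0_r. unfold Rpower. rewrite ln_1, Rmult_0_r, exp_0. ring.
Qed.

(* The reduced fractions [k / 2^(j+1)] are those with [k] odd, the others having been
   counted at level [j] by [fourier_double]. *)
Lemma Hs_shell_succ s f j :
  Hs_shell s f (S j) = Hs_weight s (S j) * (level_energy f (S j) - level_energy f j).
Proof.
  unfold Hs_shell. rewrite sum_n_pow2, level_energy_succ.
  replace (2 ^ S j)%nat with (2 * 2 ^ j)%nat by (simpl; lia).
  rewrite sum_lt_even_odd.
  replace (level_energy f j + _ - level_energy f j)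
    with (sum_lt (2 ^ j) (fun i => Cmod (fourier f (S j) (2 * i + 1)) ^ 2)) by ring.
  rewrite <- sum_lt_scal_l. apply sum_lt_ext; intros i _. unfold lam_valid.
  rewrite Nat.odd_even, Nat.odd_odd. simpl orb. unfold Hs_weight. ring.
Qed.

Lemma Hs_sqr_formula s f n : coset_constant n f ->
  Series (Hs_shell s f) =
  level_energy f 0
  + sum_lt n (fun j => Hs_weight s (S j) * (level_energy f (S j) - level_energy f j)).
Proof.
  intros Hf. rewrite (Series_eventually_zero _ n).
  - clear Hf. induction n.
    + simpl. rewrite Hs_shell_0. ring.
    + rewrite sum_lt_S, IHn, sum_lt_S, Hs_shell_succ. ring.
  - intros [|i] Hi; [lia|].
    rewrite Hs_shell_succ, (level_energy_top f n (S i)), (level_energy_top f n i) by (auto; lia).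
    ring.
Qed.

Lemma first_diff_spec x y v : first_diff x y v = true <-> agree x y v /\ x v <> y v.
Proof.
  unfold first_diff.
  rewrite Bool.andb_true_iff, Nat.eqb_eq, Bool.negb_true_iff, trunc_eq_agree.
  split; intros [A B]; split; auto.
  - intros E. rewrite E, Bool.eqb_reflx in B. discriminate.
  - destruct (x v), (y v); simpl; auto; exfalso; auto.
Qed.

Lemma first_diff_agree x y v k : first_diff x y v = true -> (agree x y k <-> (k <= v)%nat).
Proof.
  rewrite first_diff_spec. intros [A B]. split.
  - intros H. destruct (Nat.le_gt_cases k v); auto. exfalso. apply B, H. lia.
  - intros H. eapply agree_weaken; eauto.
Qed.

Lemma first_diff_unique x y v w : first_diff x y v = true -> w <> v -> first_diff x y w = false.
Proof.
  intros Hv Hw. destruct (first_diff x y w) eqn:Ew; auto.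
  pose proof (proj1 (first_diff_spec _ _ _) Hv) as [Av _].
  pose proof (proj1 (first_diff_spec _ _ _) Ew) as [Aw _].
  exfalso. apply Hw, Nat.le_antisymm.
  - apply (first_diff_agree x y v w Hv), Aw.
  - apply (first_diff_agree x y w v Ew), Av.
Qed.

Lemma dist2_first_diff x y v : first_diff x y v = true -> dist2 x y = (/ 2) ^ v.
Proof.
  intros H. unfold dist2.
  assert (Hoff : forall i, i <> v -> (if first_diff x y i then (/ 2) ^ i else 0) = 0)
    by (intros i Hi; rewrite (first_diff_unique x y v i H Hi); reflexivity).
  rewrite (Series_eventually_zero _ v) by (intros; apply Hoff; lia).
  rewrite sum_lt_S, H, (sum_lt_ext _ _ (fun _ => 0)), sum_lt_zero by (intros; apply Hoff; lia).
  ring.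
Qed.

Lemma exists_first_diff x y n : ~ agree x y n -> exists v, (v < n)%nat /\ first_diff x y v = true.
Proof.
  induction n as [|n IH]; intros H.
  - exfalso; apply H. intros i Hi; lia.
  - destruct (classic (agree x y n)) as [A|A].
    + exists n. split; [lia|]. apply first_diff_spec. split; auto. intros E. apply H.
      intros i Hi. destruct (Nat.eq_dec i n); [subst; auto|]. apply A; lia.
    + destruct (IH A) as [v [Hv Hv']]. exists v. split; auto.
Qed.

Lemma first_diff_transfer x y x' y' n v : agree x x' n -> agree y y' n -> (v < n)%nat ->
  first_diff x y v = true -> first_diff x' y' v = true.
Proof.
  intros Hx Hy Hv H. rewrite first_diff_spec in *. destruct H as [A B]. split.
  - intros i Hi. rewrite <- (Hx i), <- (Hy i) by lia. auto.
  - rewrite <- (Hx v), <- (Hy v) by lia. auto.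
Qed.

Lemma Rpower_pos x y : 0 < Rpower x y.
Proof. apply exp_pos. Qed.

Lemma Rpower_inv2_pow v t : Rpower ((/ 2) ^ v) t = / Rpower 2 t ^ v.
Proof.
  assert (E : (/ 2) ^ v = Rpower 2 (- INR v))
    by (rewrite Rpower_Ropp, Rpower_pow by lra; apply pow_inv).
  rewrite E, Rpower_mult, <- Rpower_pow by apply Rpower_pos.
  rewrite Rpower_mult. replace (- INR v * t) with (- (t * INR v)) by ring.
  apply Rpower_Ropp.
Qed.

Definition kernel_base (s : R) : R := Rpower 2 (1 + 2 * s).

(* [|x - y|_2 ^ (-1-2s) = kernel_base s ^ v] with [v] the valuation of [x - y] is split as
   a sum over the levels [k <= v] at which [x] and [y] still agree. *)
Definition kernel_increment (s : R) (k : nat) : R :=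
  match k with O => 1 | S k' => kernel_base s ^ S k' - kernel_base s ^ k' end.

Lemma sum_kernel_increment s v : sum_lt (S v) (kernel_increment s) = kernel_base s ^ v.
Proof.
  induction v; [simpl; ring|].
  rewrite sum_lt_S, IHv.
  change (kernel_increment s (S v)) with (kernel_base s ^ S v - kernel_base s ^ v). ring.
Qed.

Definition gagliardo_integrand (s : R) (f : Z2 -> C) (x y : Z2) : R :=
  Cmod (Cminus (f x) (f y)) ^ 2 / Rpower (dist2 x y) (1 + 2 * s).

Definition gagliardo (s : R) (f : Z2 -> C) : R :=
  haar_int (fun x => haar_int (fun y => gagliardo_integrand s f x y)).

Lemma gagliardo_integrand_levels s f n x y : coset_constant n f ->
  gagliardo_integrand s f x y =
  sum_lt n (fun k => kernel_increment s k * (if Nat.eqb (trunc x k) (trunc y k) then 1 else 0))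
  * Cmod (Cminus (f x) (f y)) ^ 2.
Proof.
  intros Hf. unfold gagliardo_integrand. destruct (classic (agree x y n)) as [A|A].
  - rewrite (Hf x y A), Cmod_minus_diag. unfold Rdiv. ring.
  - destruct (exists_first_diff x y n A) as [v [Hv Hfd]].
    rewrite (dist2_first_diff x y v Hfd), Rpower_inv2_pow.
    assert (Hlevel : forall k, Nat.eqb (trunc x k) (trunc y k) = Nat.leb k v).
    { intros k. apply Bool.eq_iff_eq_true.
      rewrite Nat.eqb_eq, Nat.leb_le, trunc_eq_agree. apply first_diff_agree, Hfd. }
    rewrite (sum_lt_vanishing_tail (S v) n); [|intros k Hk; rewrite Hlevel;
      replace (Nat.leb k v) with false by (symmetry; apply Nat.leb_gt; lia); ring | lia].
    rewrite (sum_lt_ext _ _ (kernel_increment s)), sum_kernel_increment.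
    + unfold kernel_base. field. apply pow_nonzero, Rgt_not_eq, Rpower_pos.
    + intros k Hk. rewrite Hlevel.
      replace (Nat.leb k v) with true by (symmetry; apply Nat.leb_le; lia). ring.
Qed.

Lemma gagliardo_integrand_coset_constant s f n x y x' y' : coset_constant n f ->
  agree x x' n -> agree y y' n -> gagliardo_integrand s f x y = gagliardo_integrand s f x' y'.
Proof.
  intros Hf Hx Hy. unfold gagliardo_integrand. destruct (classic (agree x y n)) as [A|A].
  - rewrite <- (Hf x x' Hx), <- (Hf y y' Hy), (Hf x y A), !Cmod_minus_diag. unfold Rdiv; ring.
  - destruct (exists_first_diff x y n A) as [v [Hv Hfd]].
    pose proof (first_diff_transfer x y x' y' n v Hx Hy Hv Hfd) as Hfd'.
    rewrite (dist2_first_diff x y v Hfd), (dist2_first_diff x' y' v Hfd').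
    rewrite (Hf x x' Hx), (Hf y y' Hy).
    reflexivity.
Qed.

Lemma gagliardo_avg s f n : coset_constant n f ->
  gagliardo s f = avg n (fun x => avg n (fun y => gagliardo_integrand s f x y)).
Proof.
  intros Hf. unfold gagliardo.
  assert (Hin : forall x, haar_int (fun y => gagliardo_integrand s f x y)
                          = avg n (fun y => gagliardo_integrand s f x y)).
  { intros x. apply haar_int_avg. intros y y' H.
    apply (gagliardo_integrand_coset_constant s f n); auto. intros j _; auto. }
  rewrite (haar_int_avg _ n).
  - unfold avg. f_equal. apply sum_lt_ext; intros. rewrite Hin. reflexivity.
  - intros x x' H. rewrite !Hin. unfold avg. f_equal. apply sum_lt_ext; intros.
    apply (gagliardo_integrand_coset_constant s f n); auto. intros j _; auto.
Qed.

Definition congruent_pairs_energy (f : Z2 -> C) (n k : nat) : R :=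
  sum_lt (2 ^ n) (fun a => sum_lt (2 ^ n) (fun b =>
    (if Nat.eqb (a mod 2 ^ k) (b mod 2 ^ k) then 1 else 0)
    * Cmod (Cminus (f (of_nat a)) (f (of_nat b))) ^ 2)).

Lemma gagliardo_levels s f n : coset_constant n f ->
  gagliardo s f =
  sum_lt n (fun k => kernel_increment s k * ((/ 2) ^ n * (/ 2) ^ n * congruent_pairs_energy f n k)).
Proof.
  intros Hf. rewrite (gagliardo_avg s f n Hf). unfold avg, congruent_pairs_energy.
  set (G := fun k a b => kernel_increment s k
                         * (if Nat.eqb (a mod 2 ^ k) (b mod 2 ^ k) then 1 else 0)
                         * Cmod (Cminus (f (of_nat a)) (f (of_nat b))) ^ 2).
  rewrite (sum_lt_ext (2 ^ n) _ (fun a => (/ 2) ^ n * sum_lt n (fun k => sum_lt (2 ^ n) (G k a)))).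
  2:{ intros a _. f_equal. rewrite <- sum_lt_swap. apply sum_lt_ext; intros b _.
      rewrite (gagliardo_integrand_levels s f n) by auto.
      rewrite <- sum_lt_scal_r. apply sum_lt_ext; intros k _.
      unfold G. rewrite !trunc_of_nat. reflexivity. }
  rewrite sum_lt_scal_l, sum_lt_swap, <- Rmult_assoc, <- sum_lt_scal_l.
  apply sum_lt_ext; intros k _. unfold G.
  rewrite (sum_lt_ext (2 ^ n) _ (fun a => kernel_increment s k * sum_lt (2 ^ n) (fun b =>
     (if Nat.eqb (a mod 2 ^ k) (b mod 2 ^ k) then 1 else 0)
     * Cmod (Cminus (f (of_nat a)) (f (of_nat b))) ^ 2))).
  - rewrite sum_lt_scal_l. ring.
  - intros a _. rewrite <- sum_lt_scal_l. apply sum_lt_ext; intros. ring.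
Qed.

Lemma sum_pairs_Cmod_sqr_diff M (u : nat -> C) :
  sum_lt M (fun q => sum_lt M (fun q' => Cmod (Cminus (u q) (u q')) ^ 2))
  = 2 * INR M * sum_lt M (fun q => Cmod (u q) ^ 2)
    - 2 * (sum_lt M (fun q => fst (u q)) ^ 2 + sum_lt M (fun q => snd (u q)) ^ 2).
Proof.
  rewrite (sum_lt_ext _ _ (fun q => sum_lt M (fun q' => (fst (u q) - fst (u q')) ^ 2)
                                   + sum_lt M (fun q' => (snd (u q) - snd (u q')) ^ 2))).
  - rewrite sum_lt_plus, !sum_pairs_sqr_diff.
    rewrite (sum_lt_ext _ (fun q => Cmod (u q) ^ 2) (fun q => fst (u q) ^ 2 + snd (u q) ^ 2))
      by (intros; apply Cmod_sqr).
    rewrite sum_lt_plus. ring.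
  - intros q _. rewrite <- sum_lt_plus. apply sum_lt_ext; intros. apply Cmod_minus_sqr.
Qed.

Lemma congruent_pairs_energy_blocks f n k : (k <= n)%nat ->
  congruent_pairs_energy f n k =
  sum_lt (2 ^ k) (fun r => sum_lt (2 ^ (n - k)) (fun q => sum_lt (2 ^ (n - k)) (fun q' =>
    Cmod (Cminus (f (of_nat (r + 2 ^ k * q))) (f (of_nat (r + 2 ^ k * q')))) ^ 2))).
Proof.
  intros Hk. unfold congruent_pairs_energy.
  replace (2 ^ n)%nat with (2 ^ k * 2 ^ (n - k))%nat by (rewrite <- Nat.pow_add_r; f_equal; lia).
  rewrite sum_lt_mul. apply sum_lt_ext; intros r Hr. apply sum_lt_ext; intros q _.
  rewrite sum_lt_mul, mod_pow2_block by auto.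
  rewrite <- (sum_lt_delta (2 ^ k) r (fun r' => sum_lt (2 ^ (n - k)) (fun q' =>
    Cmod (Cminus (f (of_nat (r + 2 ^ k * q))) (f (of_nat (r' + 2 ^ k * q')))) ^ 2))) by auto.
  apply sum_lt_ext; intros r' Hr'.
  destruct (Nat.eqb_spec r r') as [<-|Hne].
  - apply sum_lt_ext; intros q' _. rewrite mod_pow2_block, Nat.eqb_refl by auto. ring.
  - rewrite (sum_lt_ext _ _ (fun _ => 0)); [apply sum_lt_zero|].
    intros q' _. rewrite mod_pow2_block by auto.
    destruct (Nat.eqb_spec r r'); [lia|]. ring.
Qed.

(* The conditional variance of [f] on the cosets of [2^k Z2]. *)
Lemma congruent_pairs_energy_formula f n k : coset_constant n f -> (k <= n)%nat ->
  (/ 2) ^ n * (/ 2) ^ n * congruent_pairs_energy f n k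
  = 2 * (/ 2) ^ k * (L2sq f - level_energy f k).
Proof.
  intros Hf Hk.
  rewrite congruent_pairs_energy_blocks by auto.
  rewrite (sum_lt_ext _ _ (fun r => 2 * INR (2 ^ (n - k)) *
             sum_lt (2 ^ (n - k)) (fun q => Cmod (f (of_nat (r + 2 ^ k * q))) ^ 2)
           - 2 * (block_re f k n r ^ 2 + block_im f k n r ^ 2)))
    by (intros; apply sum_pairs_Cmod_sqr_diff).
  rewrite sum_lt_minus, !sum_lt_scal_l.
  pose proof (avg_blocks n k (fun x => Cmod (f x) ^ 2) Hk) as Havg. unfold avg in Havg.
  rewrite (L2sq_avg f n Hf), (level_energy_blocks f n k n), INR_pow2 by auto.
  unfold avg. rewrite Havg.
  assert (E : (2:R) ^ n = 2 ^ k * 2 ^ (n - k)) by (rewrite <- pow_add; f_equal; lia).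
  assert (0 < 2 ^ k) by (apply pow_lt; lra).
  assert (0 < 2 ^ (n - k)) by (apply pow_lt; lra).
  rewrite !pow_inv, E. field. lra.
Qed.

Definition uniform_on_ball (f : Z2 -> C) (p : Z2) (L : nat) : Prop :=
  exists N, forall y z, agree p y L -> agree p z L -> agree y z N -> f y = f z.

Definition set_digit (p : Z2) (L : nat) (b : bool) : Z2 :=
  fun i => if Nat.eqb i L then b else p i.

Lemma uniform_on_ball_halves f p L :
  uniform_on_ball f (set_digit p L true) (S L) -> uniform_on_ball f (set_digit p L false) (S L) ->
  uniform_on_ball f p L.
Proof.
  intros [N1 H1] [N0 H0]. exists (Nat.max (S L) (Nat.max N1 N0)).
  intros y z Hy Hz Hyz.
  assert (Hb : y L = z L) by (apply Hyz; lia).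
  assert (Hhalf : forall w, agree p w L -> agree (set_digit p L (w L)) w (S L)).
  { intros w Hw i Hi. unfold set_digit.
    destruct (Nat.eqb_spec i L); [subst; auto|]. apply Hw; lia. }
  assert (Hyz' : forall N, (N <= Nat.max (S L) (Nat.max N1 N0))%nat -> agree y z N)
    by (intros; eapply agree_weaken; eauto).
  destruct (y L) eqn:E; [apply H1|apply H0]; try (apply Hyz'; lia);
    [rewrite <- E | rewrite Hb | rewrite <- E | rewrite Hb]; apply Hhalf; auto.
Qed.

(* Koenig's lemma: if [f] is not uniform on a ball, it is not uniform on one of its halves;
   following such halves produces a point at which [f] cannot be locally constant. *)
Definition bad_half (f : Z2 -> C) (p : Z2) (L : nat) : bool :=
  if excluded_middle_informative (uniform_on_ball f (set_digit p L true) (S L))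
  then false else true.

Fixpoint bad_branch (f : Z2 -> C) (L : nat) : Z2 :=
  match L with
  | O => fun _ => false
  | S L' => set_digit (bad_branch f L') L' (bad_half f (bad_branch f L') L')
  end.

Lemma bad_branch_not_uniform f L :
  ~ uniform_on_ball f (bad_branch f 0) 0 -> ~ uniform_on_ball f (bad_branch f L) L.
Proof.
  intros H0. induction L as [|L IH]; auto. simpl. unfold bad_half.
  destruct (excluded_middle_informative
              (uniform_on_ball f (set_digit (bad_branch f L) L true) (S L))) as [G|G]; auto.
  intros G'. apply IH, uniform_on_ball_halves; auto.
Qed.

Lemma bad_branch_stable f i L : (i < L)%nat -> bad_branch f L i = bad_branch f (S i) i.
Proof.
  intros H. induction H; [reflexivity|]. simpl. unfold set_digit at 1.
  destruct (Nat.eqb_spec i m); [lia|exact IHle].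
Qed.

Lemma locally_constant_coset_constant f : locally_constant f -> exists n, coset_constant n f.
Proof.
  intros Hlc. apply NNPP. intros Hn.
  assert (H0 : ~ uniform_on_ball f (bad_branch f 0) 0).
  { intros [N HN]. apply Hn. exists N. intros x y H. apply HN; auto; intros i Hi; lia. }
  set (z := fun i => bad_branch f (S i) i).
  destruct (Hlc z) as [n Hz].
  apply (bad_branch_not_uniform f n H0). exists O. intros y w Hy Hw _.
  assert (A : agree z (bad_branch f n) n)
    by (intros i Hi; unfold z; symmetry; apply bad_branch_stable; auto).
  rewrite (Hz y), (Hz w); auto; eapply agree_trans; eauto.
Qed.

Definition Hs_ratio (s : R) : R := Rpower 2 (2 * s).

Lemma Hs_ratio_gt1 s : 0 < s -> 1 < Hs_ratio s.
Proof. intros H. unfold Hs_ratio. rewrite <- (Rpower_O 2) by lra. apply Rpower_lt; lra. Qed.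

Lemma Rpower_pow2 m a : Rpower (2 ^ m) a = Rpower 2 a ^ m.
Proof.
  rewrite <- (Rpower_pow m 2), Rpower_mult, <- Rpower_pow, Rpower_mult by (apply Rpower_pos || lra).
  f_equal. ring.
Qed.

Lemma Hs_weight_bounds s j : 0 < s ->
  Hs_ratio s ^ S j <= Hs_weight s (S j) <= Hs_ratio s ^ S (S j).
Proof.
  intros Hs. unfold Hs_weight, lam_abs, Hs_ratio. simpl Nat.eqb. cbv iota.
  rewrite <- !Rpower_pow2. assert (0 < 2 ^ S j) by (apply pow_lt; lra). split.
  - apply Rle_Rpower_l; [lra | split; lra].
  - apply Rle_Rpower_l; [lra | split; [lra|]]. pose proof (pow_R1_Rle 2 j ltac:(lra)). simpl. lra.
Qed.

Lemma kernel_level_weight_bounds s k : 0 < s ->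
  Hs_ratio s ^ k <= kernel_increment s k * (2 * (/ 2) ^ k) <= 2 * Hs_ratio s ^ k.
Proof.
  intros Hs. pose proof (Hs_ratio_gt1 s Hs). destruct k as [|k]; [simpl; lra|].
  assert (Hbase : kernel_base s = 2 * Hs_ratio s)
    by (unfold kernel_base, Hs_ratio; rewrite Rpower_plus, Rpower_1 by lra; reflexivity).
  assert (E : kernel_increment s (S k) * (2 * (/ 2) ^ S k) = Hs_ratio s ^ k * (2 * Hs_ratio s - 1)).
  { unfold kernel_increment. rewrite Hbase.
    replace ((2 * Hs_ratio s) ^ S k - (2 * Hs_ratio s) ^ k)
      with ((2 * Hs_ratio s) ^ k * (2 * Hs_ratio s - 1)) by (simpl; ring).
    rewrite Rpow_mult_distr.
    replace (2 ^ k * Hs_ratio s ^ k * (2 * Hs_ratio s - 1) * (2 * (/ 2) ^ S k))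
      with ((2 * / 2) ^ k * Hs_ratio s ^ k * (2 * Hs_ratio s - 1))
      by (rewrite Rpow_mult_distr; simpl; field).
    replace (2 * / 2) with 1 by field. rewrite pow1. ring. }
  rewrite E. assert (0 < Hs_ratio s ^ k) by (apply pow_lt; lra). simpl. split; nra.
Qed.

Lemma geometric_sum q n : (q - 1) * sum_lt n (fun k => q ^ k) = q ^ n - 1.
Proof.
  induction n; [simpl; ring|].
  rewrite sum_lt_S. simpl. rewrite Rmult_plus_distr_l, IHn. ring.
Qed.

(* Summation by parts:
   [sum_k q^k (g n - g k) = sum_j (q^(j+1) - 1) / (q - 1) * (g (j+1) - g j)]. *)
Lemma geometric_tail_bound (g : nat -> R) q : 1 < q -> (forall j, g j <= g (S j)) -> forall n,
  (q - 1) * sum_lt n (fun k => q ^ k * (g n - g k))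
  <= sum_lt n (fun j => q ^ S j * (g (S j) - g j)).
Proof.
  intros Hq Hg n. induction n as [|n IH]; [simpl; lra|].
  rewrite !sum_lt_S.
  rewrite (sum_lt_ext n _ (fun k => q ^ k * (g n - g k) + (g (S n) - g n) * q ^ k))
    by (intros; ring).
  rewrite sum_lt_plus, sum_lt_scal_l.
  pose proof (geometric_sum q n). pose proof (Hg n).
  assert (0 < q ^ n) by (apply pow_lt; lra).
  replace (g (S n) - g (S n)) with 0 by ring. replace (q ^ S n) with (q * q ^ n) by (simpl; ring).
  set (X := sum_lt n (fun k => q ^ k)) in *.
  set (Y := sum_lt n (fun j => q ^ S j * (g (S j) - g j))) in *.
  set (Z := sum_lt n (fun k => q ^ k * (g n - g k))) in *.
  nra.
Qed.

Section Comparison.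

Variables (s : R) (f : Z2 -> C) (n : nat).
Hypotheses (Hs : 0 < s) (Hf : coset_constant n f).

Let q := Hs_ratio s.
Let L := L2sq f.
Let E := level_energy f.
Let H := Series (Hs_shell s f).

Let gap := sum_lt n (fun k => q ^ k * (L - E k)).

Lemma ratio_gt1 : 1 < q.
Proof. apply Hs_ratio_gt1, Hs. Qed.

Lemma L2sq_eq_top_energy : L = E n.
Proof. symmetry. apply (level_energy_top f n n); auto. Qed.

Lemma energy_gap_nonneg k : (k <= n)%nat -> 0 <= L - E k.
Proof.
  intros Hk. rewrite L2sq_eq_top_energy.
  pose proof (level_energy_monotone f k n Hk). unfold E. lra.
Qed.

Lemma L2sq_nonneg : 0 <= L.
Proof. rewrite L2sq_eq_top_energy. apply level_energy_nonneg. Qed.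

Lemma energy_increment_nonneg j : 0 <= E (S j) - E j.
Proof. pose proof (level_energy_le_succ f j). unfold E. lra. Qed.

Lemma gap_nonneg : 0 <= gap.
Proof.
  apply sum_lt_nonneg; intros k Hk.
  pose proof (energy_gap_nonneg k ltac:(lia)).
  assert (0 < q ^ k) by (apply pow_lt; pose proof ratio_gt1; lra). nra.
Qed.

Lemma gagliardo_between_gaps : gap <= gagliardo s f <= 2 * gap.
Proof.
  assert (HD : gagliardo s f
               = sum_lt n (fun k => kernel_increment s k * (2 * (/ 2) ^ k) * (L - E k))).
  { rewrite (gagliardo_levels s f n Hf). apply sum_lt_ext; intros k Hk.
    rewrite (congruent_pairs_energy_formula f n k Hf) by lia. unfold L, E. ring. }
  rewrite HD. unfold gap. split; [|rewrite <- sum_lt_scal_l];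
    apply sum_lt_le; intros k Hk; pose proof (kernel_level_weight_bounds s k Hs);
    pose proof (energy_gap_nonneg k ltac:(lia)); unfold q; nra.
Qed.

Lemma gagliardo_nonneg : 0 <= gagliardo s f.
Proof. pose proof gap_nonneg. pose proof gagliardo_between_gaps. lra. Qed.

Lemma Hs_sqr_levels : H = E 0 + sum_lt n (fun j => Hs_weight s (S j) * (E (S j) - E j)).
Proof. apply Hs_sqr_formula, Hf. Qed.

Lemma Hs_sqr_le_gap : H <= L + q ^ 2 * gap.
Proof.
  rewrite Hs_sqr_levels. unfold gap. rewrite <- sum_lt_scal_l.
  assert (E 0 <= L) by (rewrite L2sq_eq_top_energy; apply level_energy_monotone; lia).
  assert (sum_lt n (fun j => Hs_weight s (S j) * (E (S j) - E j))
          <= sum_lt n (fun k => q ^ 2 * (q ^ k * (L - E k)))); [|lra].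
  apply sum_lt_le; intros j Hj.
  destruct (Hs_weight_bounds s j Hs) as [_ Hw].
  pose proof (energy_increment_nonneg j). pose proof (energy_gap_nonneg (S j) ltac:(lia)).
  replace (q ^ 2 * (q ^ j * (L - E j))) with (q ^ S (S j) * (L - E j)) by (simpl; ring).
  apply Rle_trans with (q ^ S (S j) * (E (S j) - E j)).
  - apply Rmult_le_compat_r; [lra|apply Hw].
  - apply Rmult_le_compat_l; [apply pow_le; pose proof ratio_gt1; lra|lra].
Qed.

Lemma L2sq_le_Hs_sqr : L <= H.
Proof.
  rewrite Hs_sqr_levels, L2sq_eq_top_energy.
  replace (E n) with (E 0 + sum_lt n (fun j => E (S j) - E j)) by (rewrite sum_lt_telescope; ring).
  apply Rplus_le_compat_l, sum_lt_le; intros j _.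
  pose proof (Hs_weight_bounds s j Hs). pose proof (energy_increment_nonneg j).
  pose proof (pow_R1_Rle q (S j) (Rlt_le _ _ ratio_gt1)). unfold q in *. nra.
Qed.

Lemma gap_le_Hs_sqr : (q - 1) * gap <= H.
Proof.
  pose proof ratio_gt1.
  apply Rle_trans with (sum_lt n (fun j => q ^ S j * (E (S j) - E j))).
  - unfold gap. rewrite L2sq_eq_top_energy. apply geometric_tail_bound; [auto|].
    apply level_energy_le_succ.
  - rewrite Hs_sqr_levels.
    assert (0 <= E 0) by apply level_energy_nonneg.
    assert (sum_lt n (fun j => q ^ S j * (E (S j) - E j))
            <= sum_lt n (fun j => Hs_weight s (S j) * (E (S j) - E j))); [|lra].
    apply sum_lt_le; intros j _.
    pose proof (Hs_weight_bounds s j Hs). pose proof (energy_increment_nonneg j). unfold q. nra.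
Qed.

End Comparison.

Lemma Hs_sqr_upper s f n : 0 < s -> coset_constant n f ->
  Series (Hs_shell s f) <= Hs_ratio s ^ 2 * (L2sq f + gagliardo s f).
Proof.
  intros Hs Hf.
  pose proof (Hs_sqr_le_gap s f n Hs Hf). pose proof (gagliardo_between_gaps s f n Hs Hf).
  pose proof (pow_R1_Rle (Hs_ratio s) 2 (Rlt_le _ _ (Hs_ratio_gt1 s Hs))).
  pose proof (L2sq_nonneg f n Hf).
  nra.
Qed.

Lemma Hs_sqr_lower s f n : 0 < s -> coset_constant n f ->
  L2sq f + gagliardo s f <= (1 + 2 / (Hs_ratio s - 1)) * Series (Hs_shell s f).
Proof.
  intros Hs Hf. pose proof (Hs_ratio_gt1 s Hs).
  pose proof (L2sq_le_Hs_sqr s f n Hs Hf). pose proof (gap_le_Hs_sqr s f n Hs Hf).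
  pose proof (gagliardo_between_gaps s f n Hs Hf).
  set (gap := sum_lt n _) in *.
  assert (gap <= Series (Hs_shell s f) / (Hs_ratio s - 1))
    by (apply (Rmult_le_reg_l (Hs_ratio s - 1)); [lra|]; field_simplify; lra).
  replace ((1 + 2 / (Hs_ratio s - 1)) * Series (Hs_shell s f))
    with (Series (Hs_shell s f) + 2 * (Series (Hs_shell s f) / (Hs_ratio s - 1))) by (field; lra).
  lra.
Qed.

Lemma sqrt_plus_le_sqrt_double a b : 0 <= a -> 0 <= b -> sqrt a + sqrt b <= sqrt (2 * (a + b)).
Proof.
  intros Ha Hb. pose proof (sqrt_pos a). pose proof (sqrt_pos b).
  rewrite <- (sqrt_pow2 (sqrt a + sqrt b)) by lra. apply sqrt_le_1_alt.
  pose proof (sqrt_sqrt a Ha). pose proof (sqrt_sqrt b Hb).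
  assert (0 <= (sqrt a - sqrt b) ^ 2) by apply pow2_ge_0. nra.
Qed.

Lemma sqrt_plus_ge a b : 0 <= a -> 0 <= b -> sqrt (a + b) <= sqrt a + sqrt b.
Proof.
  intros Ha Hb. pose proof (sqrt_pos a). pose proof (sqrt_pos b).
  rewrite <- (sqrt_pow2 (sqrt a + sqrt b)) by lra. apply sqrt_le_1_alt.
  pose proof (sqrt_sqrt a Ha). pose proof (sqrt_sqrt b Hb). nra.
Qed.

Theorem propositionB4 :
  forall s : R, 0 < s ->
  exists c1 c2 : R, 0 < c1 /\ 0 < c2 /\
    forall f : Z2 -> C, locally_constant f ->
      c1 * Ns s f <= Hs_norm s f /\ Hs_norm s f <= c2 * Ns s f.
Proof.
  intros s Hs. pose proof (Hs_ratio_gt1 s Hs) as Hq.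
  set (K := 1 + 2 / (Hs_ratio s - 1)).
  assert (HK : 0 < K) by (pose proof (Rdiv_lt_0_compat 2 (Hs_ratio s - 1)); unfold K; lra).
  assert (HK2 : 0 < sqrt (2 * K)) by (apply sqrt_lt_R0; lra).
  exists (/ sqrt (2 * K)), (Hs_ratio s). split; [apply Rinv_0_lt_compat, HK2|]. split; [lra|].
  intros f Hlc. destruct (locally_constant_coset_constant f Hlc) as [n Hf].
  pose proof (Hs_sqr_upper s f n Hs Hf) as Hup.
  pose proof (Hs_sqr_lower s f n Hs Hf) as Hlow. fold K in Hlow.
  change (Ns s f) with (sqrt (L2sq f) + sqrt (gagliardo s f)).
  change (Hs_norm s f) with (sqrt (Series (Hs_shell s f))).
  pose proof (L2sq_nonneg f n Hf) as HL. pose proof (gagliardo_nonneg s f n Hs Hf) as HD.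
  assert (HH : 0 <= Series (Hs_shell s f))
    by (apply (Rmult_le_reg_l K); [lra|]; rewrite Rmult_0_r; lra).
  split.
  - apply (Rmult_le_reg_l (sqrt (2 * K))); [auto|].
    rewrite <- Rmult_assoc, Rinv_r, Rmult_1_l, <- sqrt_mult by lra.
    apply Rle_trans with (1 := sqrt_plus_le_sqrt_double _ _ HL HD).
    apply sqrt_le_1_alt. lra.
  - apply Rle_trans with (sqrt (Hs_ratio s ^ 2 * (L2sq f + gagliardo s f))).
    + apply sqrt_le_1_alt, Hup.
    + rewrite sqrt_mult, sqrt_pow2 by (nra || lra).
      apply Rmult_le_compat_l; [lra|]. apply sqrt_plus_ge; auto.
Qed.
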